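(* Assume CH. There exists a Luzin set $L\subseteq\mathbb{R}$ such that $L+L=\{a+b:a,b\in L\}$ is a Bernstein set.
   Context: A Luzin set is a set $L\subseteq\mathbb{R}$ with $|L|=\mathfrak{c}$ such that $L\cap M$ is countable for every meager $M\subseteq\mathbb{R}$. A set $B\subseteq\mathbb{R}$ is a Bernstein set if for every nonempty perfect set $P\subseteq\mathbb{R}$ both $B\cap P\neq\emptyset$ and $(\mathbb{R}\setminus B)\cap P\neq\emptyset$. *)

From Stdlib Require Import Reals.
Open Scope R_scope.

(* countable (possibly empty/finite): covered by a sequence *)
Definition countable_set (A : R -> Prop) : Prop :=
  exists f : nat -> R, forall x, A x -> exists n, f n = x.

(* |A| = continuum: R injects into A (A ⊆ R gives the other direction) *)
Definition has_size_continuum (A : R -> Prop) : Prop :=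
  exists g : R -> R, (forall x y, g x = g y -> x = y) /\ (forall x, A (g x)).

Definition CH : Prop :=
  forall A : R -> Prop, countable_set A \/ has_size_continuum A.

(* nowhere dense: every nonempty open interval contains a nonempty open
   subinterval disjoint from N (i.e. the closure of N has empty interior) *)
Definition nowhere_dense (N : R -> Prop) : Prop :=
  forall a b, a < b ->
    exists c d, a <= c /\ c < d /\ d <= b /\ (forall x, c < x < d -> ~ N x).

Definition meager (M : R -> Prop) : Prop :=
  exists N : nat -> R -> Prop,
    (forall n, nowhere_dense (N n)) /\ (forall x, M x -> exists n, N n x).

Definition Luzin_set (L : R -> Prop) : Prop :=
  has_size_continuum L /\
  forall M : R -> Prop, meager M -> countable_set (fun x => L x /\ M x).

Definition closed_set (P : R -> Prop) : Prop :=
  forall x, (forall eps, 0 < eps -> exists y, P y /\ Rabs (y - x) < eps) -> P x.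

Definition nonempty_perfect (P : R -> Prop) : Prop :=
  (exists x, P x) /\ closed_set P /\
  (forall x, P x -> forall eps, 0 < eps ->
     exists y, P y /\ y <> x /\ Rabs (y - x) < eps).

Definition Bernstein_set (B : R -> Prop) : Prop :=
  forall P : R -> Prop, nonempty_perfect P ->
    (exists x, B x /\ P x) /\ (exists x, ~ B x /\ P x).

Definition sumset (A B : R -> Prop) : R -> Prop :=
  fun z => exists a b, A a /\ B b /\ z = a + b.

(* Well-order the reals and call a real a stage if it has countably many predecessors.
   The stages form an uncountable initial segment (a perfect set is not countable), so by
   CH there are continuum many of them and they can enumerate all codes of closed sets,
   hence all meager F_sigma sets M_x and all nonempty perfect sets P_x.  At stage x choose
   a_x, b_x outside every M_y with y <= x and with a_x + b_x in P_x, plus a point c_x of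
   P_x that is not a sum of two points chosen up to now, while keeping the earlier c_y out
   of all new sums; these choices avoid only countably many points and meager sets, which
   by the Baire category theorem is always possible.  Then L = {a_x, b_x} meets M_x only
   in points chosen at stages up to x, L + L contains a_x + b_x in P_x, and it misses
   c_x in P_x. *)

From Pilot Require Import Defs.
From Stdlib Require Import Reals Lra Lia Classical ClassicalEpsilon.
From Stdlib Require Import FunctionalExtensionality PropExtensionality Cantor.
From mathcomp Require boolp wochoice.
From mathcomp Require Import Rstruct.
(* Re-imported so that [closed_set] refers to [Defs.closed_set], not to Stdlib's [Rtopology]. *)
Import Defs.
Open Scope R_scope.

Lemma countable_subset (A B : R -> Prop) :
  (forall x, B x -> A x) -> countable_set A -> countable_set B.
Proof. intros H [f Hf]. exists f. intros x Bx. apply Hf, H, Bx. Qed.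

Lemma countable_singleton (p : R) : countable_set (fun x => x = p).
Proof. exists (fun _ => p). intros x ->. exists 0%nat. reflexivity. Qed.

Lemma countable_Union (A : nat -> R -> Prop) :
  (forall n, countable_set (A n)) -> countable_set (fun x => exists n, A n x).
Proof.
  intros H.
  destruct (choice (fun n (f : nat -> R) => forall x, A n x -> exists m, f m = x) H) as [F HF].
  exists (fun k => let (n, m) := of_nat k in F n m).
  intros x [n Hn]. destruct (HF n x Hn) as [m Hm].
  exists (to_nat (n, m)). rewrite cancel_of_to. exact Hm.
Qed.

Lemma countable_union (A B : R -> Prop) :
  countable_set A -> countable_set B -> countable_set (fun x => A x \/ B x).
Proof.
  intros HA HB.
  apply (countable_subset (fun x => exists n, (if Nat.eqb n 0 then A else B) x)).
  - intros x [H|H]; [exists 0%nat | exists 1%nat]; exact H.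
  - apply countable_Union. intros n; destruct (Nat.eqb n 0); assumption.
Qed.

Lemma countable_image (A : R -> Prop) (g : R -> R) :
  countable_set A -> countable_set (fun y => exists x, A x /\ y = g x).
Proof.
  intros [f Hf]. exists (fun n => g (f n)).
  intros y [x [Ax ->]]. destruct (Hf x Ax) as [n <-]. exists n. reflexivity.
Qed.

Lemma countable_image2 (A B : R -> Prop) (g : R -> R -> R) :
  countable_set A -> countable_set B ->
  countable_set (fun y => exists a b, A a /\ B b /\ y = g a b).
Proof.
  intros [f Hf] [f' Hf'].
  exists (fun k => let (n, m) := of_nat k in g (f n) (f' m)).
  intros y [a [b [Aa [Bb ->]]]].
  destruct (Hf a Aa) as [n <-]. destruct (Hf' b Bb) as [m <-].
  exists (to_nat (n, m)). rewrite cancel_of_to. reflexivity.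
Qed.

Lemma countable_sumset (A B : R -> Prop) :
  countable_set A -> countable_set B -> countable_set (sumset A B).
Proof. exact (fun HA HB => countable_image2 A B Rplus HA HB). Qed.

Lemma nowhere_dense_empty : nowhere_dense (fun _ => False).
Proof. intros a b ab. exists a, b; repeat split; lra || auto. Qed.

Lemma nowhere_dense_singleton (p : R) : nowhere_dense (fun x => x = p).
Proof.
  intros a b ab. destruct (Rle_lt_dec p ((a + b) / 2)).
  - exists ((a + b) / 2), b; repeat split; try lra. intros x Hx ->; lra.
  - exists a, ((a + b) / 2); repeat split; try lra. intros x Hx ->; lra.
Qed.

Lemma nowhere_dense_reflect (N : R -> Prop) (p : R) :
  nowhere_dense N -> nowhere_dense (fun x => N (p - x)).
Proof.
  intros HN a b ab. destruct (HN (p - b) (p - a)) as [c [d [? [? [? Hd]]]]]; [lra|].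
  exists (p - d), (p - c); repeat split; try lra.
  intros x Hx. apply Hd. lra.
Qed.

Lemma meager_subset (M M' : R -> Prop) :
  (forall x, M' x -> M x) -> meager M -> meager M'.
Proof. intros H [N [HN HM]]. exists N. split; auto. Qed.

Lemma meager_Union (A : nat -> R -> Prop) :
  (forall n, meager (A n)) -> meager (fun x => exists n, A n x).
Proof.
  intros H.
  destruct (choice (fun n (N : nat -> R -> Prop) =>
    (forall k, nowhere_dense (N k)) /\ (forall x, A n x -> exists k, N k x)) H) as [F HF].
  exists (fun k => let (n, m) := of_nat k in F n m). split.
  - intros k. destruct (of_nat k) as [n m]. apply (HF n).
  - intros x [n Hn]. destruct (proj2 (HF n) x Hn) as [m Hm].
    exists (to_nat (n, m)). rewrite cancel_of_to. exact Hm.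
Qed.

Lemma meager_union (A B : R -> Prop) :
  meager A -> meager B -> meager (fun x => A x \/ B x).
Proof.
  intros HA HB.
  apply (meager_subset (fun x => exists n, (if Nat.eqb n 0 then A else B) x)).
  - intros x [H|H]; [exists 0%nat | exists 1%nat]; exact H.
  - apply meager_Union. intros n; destruct (Nat.eqb n 0); assumption.
Qed.

Lemma countable_meager (A : R -> Prop) : countable_set A -> meager A.
Proof.
  intros [f Hf]. exists (fun n x => x = f n). split.
  - intros n. apply nowhere_dense_singleton.
  - intros x Ax. destruct (Hf x Ax) as [n Hn]. exists n. auto.
Qed.

Lemma meager_reflect (M : R -> Prop) (p : R) : meager M -> meager (fun x => M (p - x)).
Proof.
  intros [N [HN HM]]. exists (fun n x => N n (p - x)). split.
  - intros n. apply nowhere_dense_reflect, HN.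
  - intros x Mx. apply HM, Mx.
Qed.

Lemma nonempty_perfect_full : nonempty_perfect (fun _ => True).
Proof.
  split; [exists 0; exact I | split; [intros x _; exact I |]].
  intros x _ eps Heps. exists (x + eps / 2). split; [exact I | split; [lra|]].
  rewrite Rabs_right; lra.
Qed.

(** * The Baire category theorem for closed sets *)

Definition nowhere_dense_in (P N : R -> Prop) : Prop :=
  forall a b, a < b -> (exists q, P q /\ a < q < b) ->
    exists c d, a <= c /\ c < d /\ d <= b /\ (exists q, P q /\ c < q < d) /\
      forall x, c < x < d -> ~ N x.

Section Baire.
Variables (P : R -> Prop) (N : nat -> R -> Prop).
Hypothesis P_closed : closed_set P.
Hypothesis N_nowhere_dense : forall n, nowhere_dense_in P (N n).

Definition meets_P (I : R * R) : Prop :=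
  fst I < snd I /\ exists q, P q /\ fst I < q < snd I.

Definition refines (n : nat) (I J : R * R) : Prop :=
  fst I < fst J /\ snd J < snd I /\ snd J - fst J < / INR (S n) /\ meets_P J /\
  forall x, fst J <= x <= snd J -> ~ N n x.

Lemma refines_exists n I : meets_P I -> exists J, refines n I J.
Proof.
  intros [ab Hq].
  destruct (N_nowhere_dense n (fst I) (snd I) ab Hq)
    as [c [d [ac [cd [db [[q [Pq Hqcd]] Hd]]]]]].
  assert (Hpos : 0 < / INR (S n)) by (apply Rinv_0_lt_compat, lt_0_INR; lia).
  set (m := Rmin (Rmin (q - c) (d - q)) (/ INR (S n))).
  assert (m1 : m <= q - c) by (unfold m; eapply Rle_trans; [apply Rmin_l | apply Rmin_l]).
  assert (m2 : m <= d - q) by (unfold m; eapply Rle_trans; [apply Rmin_l | apply Rmin_r]).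
  assert (m3 : m <= / INR (S n)) by (unfold m; apply Rmin_r).
  assert (m0 : 0 < m) by (unfold m; repeat apply Rmin_glb_lt; lra).
  exists (q - m / 3, q + m / 3). unfold refines, meets_P; cbn [fst snd].
  repeat split; try lra.
  - exists q; repeat split; auto; lra.
  - intros x Hx. apply Hd. lra.
Qed.

Section Nested.
Variable I : nat -> R * R.
Hypothesis I_meets_P : meets_P (I 0%nat).
Hypothesis I_refines : forall n, refines n (I n) (I (S n)).

Lemma nested_fst_mono n m : (n <= m)%nat -> fst (I n) <= fst (I m).
Proof.
  induction 1 as [|m _ IH]; [lra|]. destruct (I_refines m) as [H _]. lra.
Qed.

Lemma nested_snd_mono n m : (n <= m)%nat -> snd (I m) <= snd (I n).
Proof.
  induction 1 as [|m _ IH]; [lra|]. destruct (I_refines m) as [_ [H _]]. lra.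
Qed.

Lemma nested_fst_lt_snd n m : fst (I n) < snd (I m).
Proof.
  assert (H1 := nested_fst_mono n (max n m) (Nat.le_max_l n m)).
  assert (H2 := nested_snd_mono m (max n m) (Nat.le_max_r n m)).
  assert (H : meets_P (I (max n m))).
  { destruct (max n m) as [|k]; [exact I_meets_P | apply (I_refines k)]. }
  destruct H as [H _]. lra.
Qed.

Lemma nested_limit : exists x, P x /\ forall n, ~ N n x.
Proof.
  set (E := fun y => exists n, y = fst (I n)).
  assert (Eb : bound E).
  { exists (snd (I 0%nat)). intros y [n ->]. left. apply nested_fst_lt_snd. }
  destruct (completeness E Eb (ex_intro _ _ (ex_intro _ 0%nat eq_refl))) as [x [Hub Hlub]].
  assert (Hx : forall n, fst (I n) <= x <= snd (I n)).
  { intros n. split; [apply Hub; exists n; reflexivity |].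
    apply Hlub. intros y [m ->]. left. apply nested_fst_lt_snd. }
  exists x. split.
  - apply P_closed. intros eps Heps.
    destruct (archimed_cor1 eps Heps) as [[|n] [Hn Hn0]]; [lia|].
    destruct (I_refines n) as [_ [_ [Hlen [[_ [q [Pq Hq]]] _]]]].
    exists q. split; [exact Pq|]. destruct (Hx (S n)).
    apply Rabs_def1; lra.
  - intros n. destruct (I_refines n) as [_ [_ [_ [_ Hd]]]]. apply Hd, Hx.
Qed.

End Nested.

Lemma closed_Baire : (exists q, P q) -> exists x, P x /\ forall n, ~ N n x.
Proof.
  intros [q0 Pq0].
  destruct (choice (fun (nI : nat * (R * R)) J => meets_P (snd nI) -> refines (fst nI) (snd nI) J))
    as [F HF].
  { intros [n I]. destruct (classic (meets_P I)) as [H|H].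
    - destruct (refines_exists n I H) as [J HJ]. exists J. auto.
    - exists I. tauto. }
  set (I := nat_rect (fun _ => (R * R)%type) (q0 - 1, q0 + 1) (fun n J => F (n, J))).
  assert (I0 : meets_P (I 0%nat)).
  { split; cbn; [lra | exists q0; split; [exact Pq0 | lra]]. }
  apply (nested_limit I I0).
  assert (HI : forall n, meets_P (I n) /\ refines n (I n) (I (S n))).
  { induction n as [|n [_ IH]].
    - split; [exact I0 | exact (HF (0%nat, I 0%nat) I0)].
    - destruct IH as [_ [_ [_ [H _]]]]. split; [exact H | exact (HF (S n, I (S n)) H)]. }
  intros n. apply HI.
Qed.

End Baire.

Lemma meager_not_cover (M : R -> Prop) : meager M -> exists x, ~ M x.
Proof.
  intros [N [HN HM]].
  destruct (closed_Baire (fun _ => True) N) as [x [_ Hx]].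
  - intros x _; exact I.
  - intros n a b ab _. destruct (HN n a b ab) as [c [d [? [? [? Hd]]]]].
    exists c, d; repeat split; auto. exists ((c + d) / 2); split; [exact I | lra].
  - exists 0; exact I.
  - exists x. intros Mx. destruct (HM x Mx) as [n Hn]. exact (Hx n Hn).
Qed.

Lemma perfect_minus_countable (P A : R -> Prop) :
  nonempty_perfect P -> countable_set A -> exists x, P x /\ ~ A x.
Proof.
  intros [Pne [Pcl Pis]] [f Hf].
  destruct (closed_Baire P (fun n x => x = f n) Pcl) as [x [Px Hx]]; [| exact Pne |].
  - intros n a b ab [q [Pq Hq]].
    assert (Hr : exists r, P r /\ a < r < b /\ r <> f n).
    { destruct (Req_dec q (f n)) as [->|ne]; [| exists q; auto].
      destruct (Pis (f n) Pq (Rmin (f n - a) (b - f n))) as [r [Pr [nr Hr]]];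
        [apply Rmin_glb_lt; lra |].
      assert (m1 := Rmin_l (f n - a) (b - f n)). assert (m2 := Rmin_r (f n - a) (b - f n)).
      apply Rabs_def2 in Hr. exists r. repeat split; auto; lra. }
    destruct Hr as [r [Pr [Hrab nr]]].
    set (d := Rmin (Rmin (r - a) (b - r)) (Rabs (r - f n))).
    assert (d0 : 0 < d).
    { unfold d. repeat apply Rmin_glb_lt; try lra. apply Rabs_pos_lt. lra. }
    assert (d1 : d <= r - a) by (unfold d; eapply Rle_trans; [apply Rmin_l | apply Rmin_l]).
    assert (d2 : d <= b - r) by (unfold d; eapply Rle_trans; [apply Rmin_l | apply Rmin_r]).
    assert (d3 : d <= Rabs (r - f n)) by (unfold d; apply Rmin_r).
    exists (r - d / 2), (r + d / 2). repeat split; try lra.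
    + exists r. repeat split; auto; lra.
    + intros x Hx ->. revert d3. unfold Rabs; destruct (Rcase_abs (r - f n)); lra.
  - exists x. split; auto. intros Ax. destruct (Hf x Ax) as [n <-]. exact (Hx n eq_refl).
Qed.

(** * Coding closed sets by binary sequences *)

Definition basic_index (n : nat) : Z * nat :=
  let (p, m) := of_nat n in let (a, b) := of_nat p in ((Z.of_nat a - Z.of_nat b)%Z, m).

Definition basic_lo (n : nat) : R := let (j, m) := basic_index n in (IZR j - 1) / INR (S m).
Definition basic_hi (n : nat) : R := let (j, m) := basic_index n in (IZR j + 1) / INR (S m).

Lemma basic_index_onto j m : exists n, basic_index n = (j, m).
Proof.
  exists (to_nat (to_nat (Z.to_nat j, Z.to_nat (- j)), m)).
  unfold basic_index. rewrite !cancel_of_to. f_equal. lia.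
Qed.

Lemma basic_interval_around x e :
  0 < e -> exists n, basic_lo n < x < basic_hi n /\ x - e < basic_lo n /\ basic_hi n < x + e.
Proof.
  intros He. destruct (archimed_cor1 (e / 2)) as [[|m] [Hm Hm0]]; [lra | lia |].
  set (D := INR (S m)). fold D in Hm.
  assert (D0 : 0 < D) by (apply lt_0_INR; lia).
  destruct (basic_index_onto (up (x * D) - 1) m) as [n Hn]. exists n.
  unfold basic_lo, basic_hi. rewrite Hn. fold D. rewrite minus_IZR.
  destruct (archimed (x * D)) as [A1 A2].
  (* the grid [Z / D] has mesh [1/D < e/2] and [up (x D) - 1] is within 1 of [x D] *)
  assert (Ev : 1 < e * D / 2).
  { assert (0 < (e / 2 - / D) * D) by (apply Rmult_lt_0_compat; lra).
    assert (/ D * D = 1) by (field; lra). nra. }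
  assert (Hl : (IZR (up (x * D)) - 1 - 1) / D * D = IZR (up (x * D)) - 2) by (field; lra).
  assert (Hh : (IZR (up (x * D)) - 1 + 1) / D * D = IZR (up (x * D))) by (field; lra).
  set (l := (IZR (up (x * D)) - 1 - 1) / D) in *. set (h := (IZR (up (x * D)) - 1 + 1) / D) in *.
  repeat split; nra.
Qed.

(* A code [k] names the closed set obtained by deleting the basic intervals it selects. *)
Definition coded (k : nat -> bool) (x : R) : Prop :=
  forall n, k n = true -> ~ (basic_lo n < x < basic_hi n).

Definition code_of (A : R -> Prop) (n : nat) : bool :=
  if excluded_middle_informative (forall u, basic_lo n < u < basic_hi n -> ~ A u) then true else false.

Lemma code_of_true A n : code_of A n = true -> forall u, basic_lo n < u < basic_hi n -> ~ A u.
Proof. unfold code_of. destruct excluded_middle_informative; [auto | discriminate]. Qed.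

Lemma code_of_disjoint A n : (forall u, basic_lo n < u < basic_hi n -> ~ A u) -> code_of A n = true.
Proof. unfold code_of. destruct excluded_middle_informative; tauto. Qed.

Lemma coded_code_of A x : A x -> coded (code_of A) x.
Proof. intros Ax n Hn Hx. exact (code_of_true A n Hn x Hx Ax). Qed.

Lemma coded_code_of_closed (P : R -> Prop) : closed_set P -> coded (code_of P) = P.
Proof.
  intros Pcl. apply functional_extensionality. intros x.
  apply propositional_extensionality. split; [|apply coded_code_of].
  intros Cx. apply Pcl. intros eps Heps. apply NNPP. intros Hfar.
  destruct (basic_interval_around x eps Heps) as [n [Hx [H1 H2]]].
  apply (Cx n); [apply code_of_disjoint | exact Hx].
  intros u Hu Pu. apply Hfar. exists u. split; [exact Pu | apply Rabs_def1; lra].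
Qed.

Lemma nowhere_dense_coded_code_of (N : R -> Prop) :
  nowhere_dense N -> nowhere_dense (coded (code_of N)).
Proof.
  intros HN a b ab. destruct (HN a b ab) as [c [d [ac [cd [db Hd]]]]].
  destruct (basic_interval_around ((c + d) / 2) ((d - c) / 2)) as [n [Hx [H1 H2]]]; [lra|].
  exists (basic_lo n), (basic_hi n). repeat split; try lra.
  intros x Hx' Cx. apply (Cx n); [| exact Hx'].
  apply code_of_disjoint. intros u Hu. apply Hd. lra.
Qed.

(** * An injection of the Cantor space into the reals *)

Fixpoint cantor_partial (k : nat -> bool) (N : nat) : R :=
  match N with
  | O => 0
  | S N => cantor_partial k N + (if k N then 2 else 0) / 3 ^ S N
  end.

Lemma cantor_partial_tail k N p :
  cantor_partial k N <= cantor_partial k (N + p) <= cantor_partial k N + / 3 ^ N - / 3 ^ (N + p).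
Proof.
  induction p as [|p IH].
  - rewrite Nat.add_0_r. lra.
  - rewrite Nat.add_succ_r. cbn [cantor_partial].
    assert (w0 : 0 < / 3 ^ (N + p)) by (apply Rinv_0_lt_compat, pow_lt; lra).
    assert (E : / 3 ^ S (N + p) = / 3 ^ (N + p) / 3).
    { cbn [pow]. field. apply pow_nonzero. lra. }
    unfold Rdiv at 1. rewrite E. destruct (k (N + p)%nat); lra.
Qed.

Lemma cantor_partial_bound k : bound (fun y => exists N, y = cantor_partial k N).
Proof.
  exists 1. intros y [N ->]. destruct (cantor_partial_tail k 0 N) as [_ H].
  assert (0 < / 3 ^ N) by (apply Rinv_0_lt_compat, pow_lt; lra).
  cbn in H. rewrite Rinv_1 in H. lra.
Qed.

Definition cantor_real (k : nat -> bool) : R :=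
  proj1_sig (completeness _ (cantor_partial_bound k) (ex_intro _ 0 (ex_intro _ 0%nat eq_refl))).

Lemma cantor_real_bounds k N :
  cantor_partial k N <= cantor_real k <= cantor_partial k N + / 3 ^ N.
Proof.
  unfold cantor_real. destruct completeness as [x [Hub Hlub]]. cbn. split.
  - apply Hub. exists N. reflexivity.
  - apply Hlub. intros y [M ->].
    destruct (Nat.le_ge_cases N M) as [Hle|Hge].
    + destruct (Nat.le_exists_sub N M Hle) as [p [-> _]]. rewrite Nat.add_comm.
      destruct (cantor_partial_tail k N p) as [_ H].
      assert (0 < / 3 ^ (N + p)) by (apply Rinv_0_lt_compat, pow_lt; lra). lra.
    + destruct (Nat.le_exists_sub M N Hge) as [p [-> _]]. rewrite Nat.add_comm in *.
      destruct (cantor_partial_tail k M p) as [H _].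
      assert (0 < / 3 ^ (M + p)) by (apply Rinv_0_lt_compat, pow_lt; lra). lra.
Qed.

Lemma first_difference (k k' : nat -> bool) n0 :
  k n0 <> k' n0 -> exists n, k n <> k' n /\ forall m, (m < n)%nat -> k m = k' m.
Proof.
  intros Hn0. apply NNPP. intros Hno. apply Hn0. clear Hn0.
  induction n0 as [n IH] using Wf_nat.lt_wf_ind.
  destruct (Bool.bool_dec (k n) (k' n)) as [e|ne]; [exact e|].
  exfalso. apply Hno. exists n. split; auto.
Qed.

(* The digits [0, 2] of a ternary expansion leave a gap that separates sequences. *)
Lemma cantor_real_inj k k' : cantor_real k = cantor_real k' -> k = k'.
Proof.
  intros E. apply functional_extensionality. intros i. apply NNPP. intros Hi.
  destruct (first_difference k k' i Hi) as [n [Hn Hlt]].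
  assert (Tn : cantor_partial k n = cantor_partial k' n).
  { assert (H : forall N, (N <= n)%nat -> cantor_partial k N = cantor_partial k' N).
    { induction N as [|N IH]; intros HN; [reflexivity|]. cbn [cantor_partial].
      rewrite IH, Hlt by lia. reflexivity. }
    apply H. lia. }
  assert (w0 : 0 < / 3 ^ S n) by (apply Rinv_0_lt_compat, pow_lt; lra).
  assert (B := cantor_real_bounds k (S n)). assert (B' := cantor_real_bounds k' (S n)).
  cbn [cantor_partial] in B, B'. rewrite Tn in B. unfold Rdiv in *.
  destruct (k n), (k' n); try (apply Hn; reflexivity); lra.
Qed.

(** * Transfinite recursion and well-orderings *)

Lemma minimal_well_founded {A : Type} (lt : A -> A -> Prop) :
  (forall P : A -> Prop, (exists x, P x) -> exists m, P m /\ forall y, P y -> ~ lt y m) ->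
  well_founded lt.
Proof.
  intros Hmin x. apply NNPP. intros H.
  destruct (Hmin (fun y => ~ Acc lt y) (ex_intro _ x H)) as [m [Hm Hmin']].
  apply Hm. constructor. intros y Hy. apply NNPP. intros Hy'. exact (Hmin' y Hy' Hy).
Qed.

Lemma well_founded_choice_rec {A T : Type} (lt : A -> A -> Prop)
    (Q : A -> (A -> T) -> T -> Prop) :
  well_founded lt -> inhabited T ->
  (forall x h, exists t, Q x h t) ->
  (forall x h1 h2 t, (forall y, lt y x -> h1 y = h2 y) -> Q x h1 t -> Q x h2 t) ->
  exists f : A -> T, forall x, Q x f (f x).
Proof.
  intros wf [t0] Hex Hloc.
  pose (extend := fun x (rec : forall y, lt y x -> T) (y : A) =>
         match excluded_middle_informative (lt y x) with left H => rec y H | right _ => t0 end).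
  pose (F := fun x rec => epsilon (inhabits t0) (Q x (extend x rec))).
  exists (Fix wf (fun _ => T) F). intros x.
  rewrite Fix_eq.
  - apply (Hloc x (extend x (fun y _ => Fix wf (fun _ => T) F y))).
    + intros y Hy. unfold extend. destruct excluded_middle_informative; [reflexivity | contradiction].
    + apply epsilon_spec, Hex.
  - intros y g1 g2 E. unfold F.
    replace g2 with g1; [reflexivity |].
    apply functional_extensionality_dep. intros z. apply functional_extensionality_dep. apply E.
Qed.

Lemma R_well_ordering : exists lt : R -> R -> Prop,
  (forall P : R -> Prop, (exists x, P x) -> exists m, P m /\ forall y, P y -> ~ lt y m) /\
  (forall x y, lt x y \/ x = y \/ lt y x) /\
  (forall x y z, lt x y -> lt y z -> lt x z).
Proof.
  destruct (wochoice.well_ordering_principle (eqtype.Equality.clone R _)) as [r wo].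
  assert (least : forall P : R -> Prop, (exists x, P x) ->
            exists m, P m /\ (forall y, P y -> r m y = true) /\
              forall m', P m' -> (forall y, P y -> r m' y = true) -> m' = m).
  { intros P [x Px].
    destruct (wo (fun u => boolp.asbool (P u))) as [m [[Pm Hm] Hu]].
    - exists x. exact (ssrbool.introT (boolp.asboolP _) Px).
    - exists m. split; [exact (ssrbool.elimT (boolp.asboolP _) Pm) | split].
      + intros y Py. exact (Hm y (ssrbool.introT (boolp.asboolP _) Py)).
      + intros m' Pm' Hm'. symmetry. apply Hu.
        split; [exact (ssrbool.introT (boolp.asboolP _) Pm') |].
        intros y Py. exact (Hm' y (ssrbool.elimT (boolp.asboolP _) Py)). }
  assert (refl : forall z, r z z = true).
  { intros z. destruct (least (eq z) (ex_intro _ z eq_refl)) as [m [<- [Hm _]]].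
    exact (Hm z eq_refl). }
  assert (antisym : forall x y, r x y = true -> r y x = true -> x = y).
  { intros x y rxy ryx.
    destruct (least (fun u => u = x \/ u = y) (ex_intro _ x (or_introl eq_refl)))
      as [m [_ [_ Hu]]].
    rewrite (Hu x), (Hu y); auto; intros u [-> | ->]; auto. }
  exists (fun x y => r y x = false). split; [|split].
  - intros P HP. destruct (least P HP) as [m [Pm [Hm _]]].
    exists m. split; [exact Pm|]. intros y Py E. rewrite Hm in E; [discriminate | exact Py].
  - intros x y. destruct (r y x) eqn:Eyx; [destruct (r x y) eqn:Exy|]; auto.
  - intros x y z Hyx Hzy. destruct (r z x) eqn:Ezx; [exfalso | reflexivity].
    destruct (least (fun u => u = x \/ u = y \/ u = z) (ex_intro _ x (or_introl eq_refl)))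
      as [m [[-> | [-> | ->]] [Hm _]]].
    + rewrite <- (antisym x z) in Hzy; [| apply Hm; auto | exact Ezx].
      rewrite Hm in Hzy; auto; discriminate.
    + rewrite Hm in Hyx; auto; discriminate.
    + rewrite Hm in Hzy; auto; discriminate.
Qed.

(* Case analysis on [w = u + v]: each failure pins [a] down to a countable or meager set. *)
Lemma exists_split_avoiding (M A C : R -> Prop) (p : R) :
  meager M -> countable_set A -> countable_set C -> ~ C p ->
  exists a, ~ M a /\ ~ M (p - a) /\
    forall w, C w ->
      ~ sumset (fun u => A u \/ u = a \/ u = p - a) (fun v => v = a \/ v = p - a) w.
Proof.
  intros HM HA HC nCp.
  set (Bad := fun u => M u \/ M (p - u) \/
     (exists w u', C w /\ A u' /\ u = w - u') \/
     (exists w u', C w /\ A u' /\ u = p - w + u') \/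
     (exists w, C w /\ u = w / 2) \/ (exists w, C w /\ u = p - w / 2)).
  assert (Bad_meager : meager Bad).
  { repeat apply meager_union.
    - exact HM.
    - exact (meager_reflect M p HM).
    - exact (countable_meager _ (countable_image2 C A (fun w u' => w - u') HC HA)).
    - exact (countable_meager _ (countable_image2 C A (fun w u' => p - w + u') HC HA)).
    - exact (countable_meager _ (countable_image C (fun w => w / 2) HC)).
    - exact (countable_meager _ (countable_image C (fun w => p - w / 2) HC)). }
  destruct (meager_not_cover Bad Bad_meager) as [a Ha]. unfold Bad in Ha.
  exists a. split; [tauto | split; [tauto |]].
  intros w Cw [u [v [Hu [Hv E]]]].
  destruct Hv as [-> | ->]; destruct Hu as [Au | [-> | ->]].
  - apply Ha. right; right; left. exists w, u. repeat split; auto. lra.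
  - apply Ha. right; right; right; right; left. exists w. split; auto. lra.
  - apply nCp. replace p with w by lra. exact Cw.
  - apply Ha. right; right; right; left. exists w, u. repeat split; auto. lra.
  - apply nCp. replace p with w by lra. exact Cw.
  - apply Ha. right; right; right; right; right. exists w. split; auto. lra.
Qed.

Record triple : Type := Triple { tr_a : R; tr_b : R; tr_c : R }.

Definition new_points (t : triple) (u : R) : Prop := u = tr_a t \/ u = tr_b t.

Section WellOrder.
Variable prec : R -> R -> Prop.
Hypothesis prec_minimal :
  forall P : R -> Prop, (exists x, P x) -> exists m, P m /\ forall y, P y -> ~ prec y m.
Hypothesis prec_total : forall x y, prec x y \/ x = y \/ prec y x.
Hypothesis prec_trans : forall x y z, prec x y -> prec y z -> prec x z.

Definition preceq (y x : R) : Prop := prec y x \/ y = x.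

Definition countably_preceded (x : R) : Prop := countable_set (fun y => prec y x).

Lemma countable_preceq x : countably_preceded x -> countable_set (fun y => preceq y x).
Proof. intros H. apply countable_union; [exact H | apply countable_singleton]. Qed.

Lemma countably_preceded_uncountable : ~ countable_set countably_preceded.
Proof.
  intros Hc.
  destruct (perfect_minus_countable _ _ nonempty_perfect_full Hc) as [x0 [_ nx0]].
  destruct (prec_minimal (fun y => ~ countably_preceded y) (ex_intro _ x0 nx0)) as [m [Hm Hmin]].
  apply Hm. apply (countable_subset countably_preceded); [| exact Hc].
  intros y Hy. apply NNPP. intros nSy. exact (Hmin y nSy Hy).
Qed.

Lemma countably_preceded_unbounded x :
  countably_preceded x -> exists y, countably_preceded y /\ prec x y.
Proof.
  intros Hx. apply NNPP. intros Hno. apply countably_preceded_uncountable.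
  apply (countable_subset (fun y => preceq y x)); [| exact (countable_preceq x Hx)].
  intros y Hy. destruct (prec_total y x) as [H|[H|H]]; [left; exact H | right; exact H |].
  exfalso. apply Hno. exists y. auto.
Qed.

Lemma exists_code_onto : CH ->
  exists code : R -> (nat -> bool), forall k, exists x, countably_preceded x /\ code x = k.
Proof.
  intros CHh.
  destruct (CHh countably_preceded) as [Hc | [g [ginj gS]]];
    [destruct (countably_preceded_uncountable Hc) |].
  exists (fun x => epsilon (inhabits (fun _ => false)) (fun k => g (cantor_real k) = x)).
  intros k. exists (g (cantor_real k)). split; [apply gS |].
  apply cantor_real_inj, ginj.
  apply (epsilon_spec _ (fun k' => g (cantor_real k') = g (cantor_real k))). exists k. reflexivity.
Qed.

Section Codes.
Variable code : R -> (nat -> bool).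
Hypothesis code_onto : forall k, exists x, countably_preceded x /\ code x = k.

Definition subcode (k : nat -> bool) (i : nat) : nat -> bool := fun n => k (to_nat (i, n)).

(* Each stage [x] names a meager set [M_x] and a nonempty perfect set [P_x]; ill-formed
   codes name the empty set and the whole line respectively. *)
Definition coded_meager (x u : R) : Prop :=
  (forall i, nowhere_dense (coded (subcode (code x) i))) /\
  exists i, coded (subcode (code x) i) u.

Definition coded_perfect (x u : R) : Prop :=
  nonempty_perfect (coded (code x)) -> coded (code x) u.

Lemma coded_meager_meager x : meager (coded_meager x).
Proof.
  destruct (classic (forall i, nowhere_dense (coded (subcode (code x) i)))) as [V|NV].
  - exists (fun i => coded (subcode (code x) i)). split; [exact V |]. intros u [_ H]; exact H.
  - exists (fun _ _ => False). split; [intros; apply nowhere_dense_empty |].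
    intros u [V _]. contradiction.
Qed.

Lemma coded_perfect_perfect x : nonempty_perfect (coded_perfect x).
Proof.
  destruct (classic (nonempty_perfect (coded (code x)))) as [V|NV].
  - replace (coded_perfect x) with (coded (code x)); [exact V |].
    apply functional_extensionality. intros u.
    apply propositional_extensionality. unfold coded_perfect. tauto.
  - replace (coded_perfect x) with (fun _ : R => True); [exact nonempty_perfect_full |].
    apply functional_extensionality. intros u.
    apply propositional_extensionality. unfold coded_perfect. tauto.
Qed.

Lemma meager_coded (M : R -> Prop) :
  meager M -> exists x, countably_preceded x /\ forall u, M u -> coded_meager x u.
Proof.
  intros [N [HN HM]].
  destruct (code_onto (fun j => let (i, n) := of_nat j in code_of (N i) n)) as [x [Hx Hc]].
  assert (Hsub : forall i, subcode (code x) i = code_of (N i)).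
  { intros i. apply functional_extensionality. intros n.
    unfold subcode. rewrite Hc, cancel_of_to. reflexivity. }
  exists x. split; [exact Hx |]. intros u Mu. split.
  - intros i. rewrite Hsub. apply nowhere_dense_coded_code_of, HN.
  - destruct (HM u Mu) as [i Hi]. exists i. rewrite Hsub. apply coded_code_of, Hi.
Qed.

Lemma perfect_coded (P : R -> Prop) :
  nonempty_perfect P -> exists x, countably_preceded x /\ forall u, coded_perfect x u -> P u.
Proof.
  intros HP. destruct (code_onto (code_of P)) as [x [Hx Hc]].
  exists x. split; [exact Hx |]. unfold coded_perfect.
  rewrite Hc, (coded_code_of_closed P (proj1 (proj2 HP))). auto.
Qed.

Definition chosen_before (x : R) (h : R -> triple) (u : R) : Prop :=
  exists y, prec y x /\ new_points (h y) u.

Definition excluded_before (x : R) (h : R -> triple) (w : R) : Prop :=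
  exists y, prec y x /\ w = tr_c (h y).

Definition chosen_upto (x : R) (h : R -> triple) (t : triple) (u : R) : Prop :=
  chosen_before x h u \/ new_points t u.

(* Stage [x] adds [tr_a t] and [tr_b t] to the Luzin set and reserves [tr_c t], a point of
   [P_x] that must stay outside [L + L]. *)
Definition admissible (x : R) (h : R -> triple) (t : triple) : Prop :=
  countably_preceded x ->
  (forall y u, preceq y x -> new_points t u -> ~ coded_meager y u) /\
  coded_perfect x (tr_a t + tr_b t) /\ coded_perfect x (tr_c t) /\
  ~ sumset (chosen_upto x h t) (chosen_upto x h t) (tr_c t) /\
  forall w, excluded_before x h w -> ~ sumset (chosen_upto x h t) (new_points t) w.

Lemma admissible_local x h1 h2 t :
  (forall y, prec y x -> h1 y = h2 y) -> admissible x h1 t -> admissible x h2 t.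
Proof.
  intros E Ht Hx. destruct (Ht Hx) as [H1 [H2 [H3 [H4 H5]]]].
  assert (Ech : forall u, chosen_before x h2 u -> chosen_before x h1 u).
  { intros u [y [Hy Hu]]. exists y. rewrite E; auto. }
  assert (Eup : forall u, chosen_upto x h2 t u -> chosen_upto x h1 t u).
  { intros u [Hu|Hu]; [left; apply Ech | right]; exact Hu. }
  split; [exact H1 | split; [exact H2 | split; [exact H3 | split]]].
  - intros [u [v [Hu [Hv Ew]]]]. apply H4. exists u, v. auto.
  - intros w [y [Hy Hw]] [u [v [Hu [Hv Ew]]]].
    apply (H5 w); [exists y; rewrite E; auto | exists u, v; auto].
Qed.

Lemma admissible_exists x h : exists t, admissible x h t.
Proof.
  destruct (classic (countably_preceded x)) as [Hx|Hx];
    [| exists (Triple 0 0 0); intros H; contradiction].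
  assert (Hch : countable_set (chosen_before x h)).
  { eapply countable_subset; [| apply countable_union;
      [apply (countable_image _ (fun y => tr_a (h y)) Hx)
      |apply (countable_image _ (fun y => tr_b (h y)) Hx)]].
    intros u [y [Hy [Hu|Hu]]]; [left | right]; exists y; auto. }
  assert (Hex : countable_set (excluded_before x h)).
  { exact (countable_image _ (fun y => tr_c (h y)) Hx). }
  set (M := fun u => exists y, preceq y x /\ coded_meager y u).
  assert (HM : meager M).
  { destruct (countable_preceq x Hx) as [e He].
    apply (meager_subset (fun u => exists n, coded_meager (e n) u)).
    - intros u [y [Hy Hu]]. destruct (He y Hy) as [n <-]. exists n. exact Hu.
    - apply meager_Union. intros n. apply coded_meager_meager. }
  destruct (perfect_minus_countable _ _ (coded_perfect_perfect x) Hex) as [p [Pp nEp]].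
  destruct (exists_split_avoiding M _ _ p HM Hch Hex nEp) as [a [Ma [Mb Hsplit]]].
  set (L := fun u => chosen_before x h u \/ u = a \/ u = p - a).
  assert (HL : countable_set L).
  { apply countable_union; [exact Hch | apply countable_union; apply countable_singleton]. }
  destruct (perfect_minus_countable _ _ (coded_perfect_perfect x) (countable_sumset L L HL HL))
    as [c [Pc nc]].
  exists (Triple a (p - a) c). intros _. cbn.
  split; [| split; [| split; [| split]]].
  - intros y u Hy [-> | ->] Hu; [apply Ma | apply Mb]; exists y; auto.
  - replace (a + (p - a)) with p by ring. exact Pp.
  - exact Pc.
  - exact nc.
  - exact Hsplit.
Qed.

Section Stages.
Variable stage : R -> triple.
Hypothesis stage_admissible : forall x, admissible x stage (stage x).

Definition luzin (u : R) : Prop := exists x, countably_preceded x /\ new_points (stage x) u.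

Lemma later_points_avoid x y u :
  countably_preceded y -> preceq x y -> new_points (stage y) u -> ~ coded_meager x u.
Proof. intros Hy Hxy Hu. exact (proj1 (stage_admissible y Hy) x u Hxy Hu). Qed.

Lemma luzin_coded_meager_countable x :
  countably_preceded x -> countable_set (fun u => luzin u /\ coded_meager x u).
Proof.
  intros Hx.
  eapply countable_subset; [| apply countable_union;
      [apply (countable_image _ (fun y => tr_a (stage y)) (countable_preceq x Hx))
      |apply (countable_image _ (fun y => tr_b (stage y)) (countable_preceq x Hx))]].
  intros u [[y [Hy Hu]] Mu].
  destruct (prec_total x y) as [H|H].
  - destruct (later_points_avoid x y u Hy (or_introl H) Hu Mu).
  - assert (Hyx : preceq y x) by (destruct H as [-> | H]; [right | left]; auto).
    destruct Hu; [left | right]; exists y; auto.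
Qed.

Lemma luzin_uncountable : ~ countable_set luzin.
Proof.
  intros Hc.
  destruct (meager_coded luzin (countable_meager _ Hc)) as [x [Hx Hcov]].
  destruct (countably_preceded_unbounded x Hx) as [y [Hy Hxy]].
  apply (later_points_avoid x y (tr_a (stage y)) Hy (or_introl Hxy) (or_introl eq_refl)).
  apply Hcov. exists y. split; [exact Hy | left; reflexivity].
Qed.

Lemma luzin_Luzin : CH -> Luzin_set luzin.
Proof.
  intros CHh. split.
  - destruct (CHh luzin) as [Hc|Hs]; [destruct (luzin_uncountable Hc) | exact Hs].
  - intros M HM. destruct (meager_coded M HM) as [x [Hx Hcov]].
    apply (countable_subset _ _ (fun u Hu => conj (proj1 Hu) (Hcov u (proj2 Hu)))).
    exact (luzin_coded_meager_countable x Hx).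
Qed.

Lemma chosen_upto_preceq x y u :
  preceq y x -> new_points (stage y) u -> chosen_upto x stage (stage x) u.
Proof. intros [H | ->] Hu; [left; exists y; auto | right; exact Hu]. Qed.

(* If [y1] is the later of the two stages, either [c_x] was fixed before [y1] and protected
   at stage [y1], or both summands were available when [c_x] was chosen. *)
Lemma excluded_not_sum x y1 y2 u v :
  countably_preceded x -> countably_preceded y1 ->
  new_points (stage y1) u -> new_points (stage y2) v -> preceq y2 y1 ->
  tr_c (stage x) <> u + v.
Proof.
  intros Hx Hy1 Hu Hv H21 E.
  destruct (prec_total x y1) as [Hxy1 | Hy1x].
  - destruct (stage_admissible y1 Hy1) as [_ [_ [_ [_ H5]]]].
    apply (H5 (tr_c (stage x))); [exists x; auto |].
    exists v, u. split; [exact (chosen_upto_preceq y1 y2 v H21 Hv) | split; [exact Hu | lra]].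
  - assert (Hy1x' : preceq y1 x) by (destruct Hy1x as [-> | H]; [right | left]; auto).
    assert (Hy2x : preceq y2 x).
    { destruct H21 as [H | ->]; [| exact Hy1x'].
      left. destruct Hy1x' as [H' | <-]; [exact (prec_trans _ _ _ H H') | exact H]. }
    destruct (stage_admissible x Hx) as [_ [_ [_ [H4 _]]]].
    apply H4. exists u, v.
    split; [exact (chosen_upto_preceq x y1 u Hy1x' Hu) |].
    split; [exact (chosen_upto_preceq x y2 v Hy2x Hv) | exact E].
Qed.

Lemma luzin_sumset_Bernstein : Bernstein_set (sumset luzin luzin).
Proof.
  intros P HP. destruct (perfect_coded P HP) as [x [Hx HPx]].
  destruct (stage_admissible x Hx) as [_ [Hab [Hc _]]].
  split.
  - exists (tr_a (stage x) + tr_b (stage x)). split; [| exact (HPx _ Hab)].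
    exists (tr_a (stage x)), (tr_b (stage x)).
    split; [exists x; split; [exact Hx | left; reflexivity] |].
    split; [exists x; split; [exact Hx | right; reflexivity] | reflexivity].
  - exists (tr_c (stage x)). split; [| exact (HPx _ Hc)].
    intros [u [v [[y1 [Hy1 Hu]] [[y2 [Hy2 Hv]] E]]]].
    destruct (prec_total y2 y1) as [H | [H | H]].
    + exact (excluded_not_sum x y1 y2 u v Hx Hy1 Hu Hv (or_introl H) E).
    + exact (excluded_not_sum x y1 y2 u v Hx Hy1 Hu Hv (or_intror H) E).
    + apply (excluded_not_sum x y2 y1 v u Hx Hy2 Hv Hu (or_introl H)). lra.
Qed.

End Stages.

Lemma Luzin_sumset_Bernstein_of_code :
  CH -> exists L, Luzin_set L /\ Bernstein_set (sumset L L).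
Proof.
  intros CHh.
  destruct (well_founded_choice_rec prec admissible (minimal_well_founded prec prec_minimal)
              (inhabits (Triple 0 0 0)) admissible_exists admissible_local) as [stage Hstage].
  exists (luzin stage). split.
  - exact (luzin_Luzin stage Hstage CHh).
  - exact (luzin_sumset_Bernstein stage Hstage).
Qed.

End Codes.

Lemma Luzin_sumset_Bernstein_of_well_order :
  CH -> exists L, Luzin_set L /\ Bernstein_set (sumset L L).
Proof.
  intros CHh. destruct (exists_code_onto CHh) as [code Hcode].
  exact (Luzin_sumset_Bernstein_of_code code Hcode CHh).
Qed.

End WellOrder.

Theorem mainTheorem17 :
  CH -> exists L : R -> Prop, Luzin_set L /\ Bernstein_set (sumset L L).
Proof.
  intros CHh.
  destruct R_well_ordering as [prec [prec_minimal [prec_total prec_trans]]].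
  exact (Luzin_sumset_Bernstein_of_well_order prec prec_minimal prec_total prec_trans CHh).
Qed.
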